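(* For all $n\ge 0$, the distribution of the quadruple $(\operatorname{asc},\operatorname{des},\operatorname{MNA},\operatorname{MND})$ on $S_n(231,312)$ equals the distribution of $(\operatorname{des},\operatorname{asc},\operatorname{MND},\operatorname{MNA})$ on $S_n(213,231)$, i.e. $$\sum_{\pi\in S_n(231,312)} t_1^{\operatorname{asc}(\pi)}t_2^{\operatorname{des}(\pi)}t_3^{\operatorname{MNA}(\pi)}t_4^{\operatorname{MND}(\pi)}=\sum_{\sigma\in S_n(213,231)} t_1^{\operatorname{des}(\sigma)}t_2^{\operatorname{asc}(\sigma)}t_3^{\operatorname{MND}(\sigma)}t_4^{\operatorname{MNA}(\sigma)}.$$
   Context: For $n\ge 0$, $S_n$ denotes the set of permutations $\pi=\pi_1\cdots\pi_n$ of $[n]=\{1,\dots,n\}$. $\pi$ avoids a pattern $\tau\in S_k$ if no subsequence $\pi_{i_1}\cdots\pi_{i_k}$ ($i_1<\dots<i_k$) satisfies $\pi_{i_a}<\pi_{i_b}\iff\tau_a<\tau_b$; $S_n(\tau,\rho)$ is the set of permutations in $S_n$ avoiding both $\tau$ and $\rho$. $\operatorname{asc}(\pi)$ (resp. $\operatorname{des}(\pi)$) is the number of $i\in[n-1]$ with $\pi_i<\pi_{i+1}$ (resp. $\pi_i>\pi_{i+1}$). $\operatorname{MNA}(\pi)$ is the maximum size of a set $I\subseteq[n-1]$ such that $\pi_i<\pi_{i+1}$ for all $i\in I$ and $|i-j|\ge 2$ for distinct $i,j\in I$; $\operatorname{MND}(\pi)$ is defined analogously with $\pi_i>\pi_{i+1}$.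 *)

(* Permutations of [n] are represented as 'S_n = {perm 'I_n},
   with positions and values shifted to 0-based (order-preserving, so pattern
   containment, ascents, descents are unchanged). *)
From mathcomp Require Import all_boot all_order all_fingroup.
Set Implicit Arguments. Unset Strict Implicit. Unset Printing Implicit Defensive.

Definition word n (p : 'S_n) : seq nat := [seq val (p i) | i <- enum 'I_n].

(* pi contains the pattern tau (given in one-line notation, any consecutive
   values; only relative order matters): there are positions
   i_1 < ... < i_k with pi_{i_a} < pi_{i_b} <-> tau_a < tau_b *)
Definition contains n (p : 'S_n) (tau : seq nat) : bool :=
  [exists f : {ffun 'I_(size tau) -> 'I_n},
     [forall a : 'I_(size tau), forall b : 'I_(size tau),
        ((a < b)%N ==> (f a < f b)%N) &&
        ((p (f a) < p (f b))%N == (nth 0 tau a < nth 0 tau b)%N)]].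

Definition avoids n (p : 'S_n) (tau : seq nat) : bool := ~~ contains p tau.

Definition is_asc n (p : 'S_n) (i : nat) : bool :=
  (i.+1 < n)%N && (nth 0 (word p) i < nth 0 (word p) i.+1)%N.
Definition is_des n (p : 'S_n) (i : nat) : bool :=
  (i.+1 < n)%N && (nth 0 (word p) i > nth 0 (word p) i.+1)%N.

Definition asc n (p : 'S_n) : nat := count (is_asc p) (iota 0 n).
Definition des n (p : 'S_n) : nat := count (is_des p) (iota 0 n).

Definition nonadj_set n (P : nat -> bool) (I : {set 'I_n}) : bool :=
  [forall i in I, P i] &&
  [forall i in I, forall j in I, (i != j) ==> ((i.+2 <= j)%N || (j.+2 <= i)%N)].

Definition MNA n (p : 'S_n) : nat :=
  \max_(I : {set 'I_n} | nonadj_set (is_asc p) I) #|I|.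
Definition MND n (p : 'S_n) : nat :=
  \max_(I : {set 'I_n} | nonadj_set (is_des p) I) #|I|.

From mathcomp Require Import all_boot all_order all_fingroup.
From mathcomp Require Import zify.
Set Implicit Arguments. Unset Strict Implicit. Unset Printing Implicit Defensive.

(* Both classes are parametrised by subsets S of the n - 1 gaps between
   adjacent positions.  A permutation avoiding 231 and 312 is layered: it is
   determined by its descent set, since two entries are in decreasing order
   exactly when every gap between them is a descent.  In a permutation
   avoiding 213 and 231 every entry is smaller or larger than all entries to
   its right according to whether it is followed by an ascent, so it is
   determined by its ascent set.  Every S is realised in both classes, by
   standardising a suitable key.  As ascents and descents partition the gaps,
   (asc, des, MNA, MND) of the layered permutation with descent set S and
   (des, asc, MND, MNA) of the other one with ascent set S are the same
   function of S. *)

Lemma card_ord_pred n (P : pred nat) : #|[set i : 'I_n | P i]| = count P (iota 0 n).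
Proof.
by rewrite -sum1dep_card -(big_mkord P (fun _ => 1)) /index_iota subn0 sum1_count.
Qed.

Lemma count_ltn_iota m n : m <= n -> count (gtn m) (iota 0 n) = m.
Proof. by move=> le_mn; rewrite -size_filter (filter_iota_ltn 0 le_mn) size_iota. Qed.

Lemma decreasing_run (f : nat -> nat) i j : i < j ->
  (forall k, i <= k < j -> f k.+1 < f k) -> f j < f i.
Proof.
elim: j => [|j IHj]; first by rewrite ltn0.
rewrite ltnS leq_eqVlt => /predU1P [<- | lt_ij] f_dec.
  by apply: f_dec; rewrite leqnn ltnSn.
apply: ltn_trans (f_dec j _) (IHj lt_ij _); first by rewrite (ltnW lt_ij) ltnSn.
by move=> k /andP [le_ik lt_kj]; apply: f_dec; rewrite le_ik ltnW.
Qed.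

Lemma card_bij_on (T U : finType) (C : pred T) (B : pred U) (f : T -> U) (g : U -> T)
    (Q : pred U) :
  (forall x, C x -> B (f x)) -> (forall y, B y -> C (g y)) ->
  (forall x, C x -> g (f x) = x) -> (forall y, B y -> f (g y) = y) ->
  #|[set x | C x && Q (f x)]| = #|[set y | B y && Q y]|.
Proof.
move=> fC gB fK gK; have -> : [set y | B y && Q y] = f @: [set x | C x && Q (f x)].
  apply/setP => y; rewrite inE; apply/andP/imsetP => [[By Qy] | [x]].
    by exists (g y); rewrite ?inE gK ?gB.
  by rewrite inE => /andP [Cx Qfx] ->; split => //; apply: fC.
rewrite card_in_imset // => x1 x2; rewrite !inE => /andP [Cx1 _] /andP [Cx2 _] eq_f.
by rewrite -(fK x1) // eq_f fK.
Qed.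

Section Entries.
Variables (n : nat) (p : 'S_n).

Definition entry k := nth 0 (word p) k.

Lemma entry_ord (i : 'I_n) : entry i = p i.
Proof. by rewrite /entry /word (nth_map i) ?size_enum_ord // nth_ord_enum. Qed.

Lemma entry_inj a b : a < n -> b < n -> entry a = entry b -> a = b.
Proof.
move=> lt_an lt_bn.
by rewrite -[a]/(Ordinal lt_an : nat) -[b]/(Ordinal lt_bn : nat) !entry_ord => /val_inj/perm_inj [].
Qed.

Lemma entry_neq3 a b c : a < b < c -> c < n ->
  [/\ entry a != entry b, entry a != entry c & entry b != entry c].
Proof.
move=> lt_abc lt_cn; have lt_an : a < n by lia.
have lt_bn : b < n by lia.
by split; apply: contraTneq lt_abc => /entry_inj; lia.
Qed.

Lemma entry_gtnE a b : a < b -> b < n -> (entry b < entry a) = ~~ (entry a < entry b).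
Proof.
move=> lt_ab lt_bn; have lt_an : a < n by lia.
have : entry a != entry b by apply: contraTneq lt_ab => /entry_inj; lia.
lia.
Qed.

Lemma is_ascE k : is_asc p k = (k.+1 < n) && (entry k < entry k.+1).
Proof. by []. Qed.

Lemma is_desE k : is_des p k = (k.+1 < n) && (entry k.+1 < entry k).
Proof. by []. Qed.

Lemma card_perm_lt (i : 'I_n) : #|[set j | p j < p i]| = p i.
Proof.
have -> : [set j | p j < p i] = p @^-1: [set k : 'I_n | k < p i].
  by apply/setP => j; rewrite !inE.
rewrite card_preimset; last exact: perm_inj.
by rewrite (card_ord_pred n (gtn (p i))) count_ltn_iota // ltnW.
Qed.

End Entries.

Lemma perm_eq_ltn n (p q : 'S_n) :
  (forall a b, a < b -> b < n -> (entry p a < entry p b) = (entry q a < entry q b)) -> p = q.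
Proof.
move=> same_lt.
have {}same_lt (i j : 'I_n) : (p i < p j) = (q i < q j).
  rewrite -!entry_ord; case: (ltngtP i j) => [lt_ij | lt_ji | /val_inj ->]; last by rewrite !ltnn.
  - exact: same_lt.
  - by rewrite !(entry_gtnE _ lt_ji) ?same_lt.
apply/permP => i; apply: val_inj => /=.
by rewrite -card_perm_lt -(card_perm_lt q); apply: eq_card => j; rewrite !inE same_lt.
Qed.

Lemma avoids3P n (p : 'S_n) x y z : uniq [:: x; y; z] ->
  reflect (forall a b c, a < b < c -> c < n ->
             ~~ [&& (entry p a < entry p b) == (x < y), (entry p a < entry p c) == (x < z)
                  & (entry p b < entry p c) == (y < z)])
    (avoids p [:: x; y; z]).
Proof.
move=> uniq_xyz.
apply: (iffP negP) => [not_con a b c lt_abc lt_cn | no_pat /existsP [f /forallP f_pat]].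
  apply/negP => cmp; apply: not_con; apply/existsP.
  have lt_an : a < n by lia.
  have lt_bn : b < n by lia.
  have [] := entry_neq3 p lt_abc lt_cn; move: uniq_xyz; rewrite /= !inE => distinct nab nac nbc.
  exists [ffun t : 'I_3 => nth (Ordinal lt_an) [:: Ordinal lt_an; Ordinal lt_bn; Ordinal lt_cn] t].
  apply/forallP => i; apply/forallP => j; rewrite !ffunE -!entry_ord.
  by case: i j => [[|[|[|i]]] lt_i3] [[|[|[|j]]] lt_j3] //=; lia.
pose o0 := @Ordinal 3 0 isT; pose o1 := @Ordinal 3 1 isT; pose o2 := @Ordinal 3 2 isT.
have /andP [lt01 /eqP e01] := forallP (f_pat o0) o1.
have /andP [_ /eqP e02] := forallP (f_pat o0) o2.
have /andP [lt12 /eqP e12] := forallP (f_pat o1) o2.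
have /negP := no_pat (f o0) (f o1) (f o2) (introT andP (conj lt01 lt12)) (ltn_ord _).
by rewrite !entry_ord e01 e02 e12 !eqxx.
Qed.

Lemma avoids231P n (p : 'S_n) :
  reflect (forall a b c, a < b < c -> c < n -> ~~ (entry p c < entry p a < entry p b))
    (avoids p [:: 2; 3; 1]).
Proof.
apply: (iffP (@avoids3P n p 2 3 1 isT)) => no_pat a b c lt_abc lt_cn;
  have := no_pat a b c lt_abc lt_cn; have [] := entry_neq3 p lt_abc lt_cn; lia.
Qed.

Lemma avoids312P n (p : 'S_n) :
  reflect (forall a b c, a < b < c -> c < n -> ~~ (entry p b < entry p c < entry p a))
    (avoids p [:: 3; 1; 2]).
Proof.
apply: (iffP (@avoids3P n p 3 1 2 isT)) => no_pat a b c lt_abc lt_cn;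
  have := no_pat a b c lt_abc lt_cn; have [] := entry_neq3 p lt_abc lt_cn; lia.
Qed.

Lemma avoids213P n (p : 'S_n) :
  reflect (forall a b c, a < b < c -> c < n -> ~~ (entry p b < entry p a < entry p c))
    (avoids p [:: 2; 1; 3]).
Proof.
apply: (iffP (@avoids3P n p 2 1 3 isT)) => no_pat a b c lt_abc lt_cn;
  have := no_pat a b c lt_abc lt_cn; have [] := entry_neq3 p lt_abc lt_cn; lia.
Qed.

Definition layered n (p : 'S_n) := avoids p [:: 2; 3; 1] && avoids p [:: 3; 1; 2].
Definition suffix_extremal n (p : 'S_n) := avoids p [:: 2; 1; 3] && avoids p [:: 2; 3; 1].

Section Layered.
Variables (n : nat) (p : 'S_n).
Hypothesis p_layered : layered p.

Lemma layered_between a b c : a < b < c -> c < n ->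
  entry p c < entry p a -> entry p c < entry p b < entry p a.
Proof.
move=> lt_abc lt_cn; case/andP: p_layered => /avoids231P av231 /avoids312P av312.
have := av231 a b c lt_abc lt_cn; have := av312 a b c lt_abc lt_cn.
have [] := entry_neq3 p lt_abc lt_cn; lia.
Qed.

Lemma layered_ltnE i j : i < j -> j < n ->
  (entry p j < entry p i) = all (is_des p) (iota i (j - i)).
Proof.
move=> lt_ij lt_jn; apply/idP/allP => [lt_ji k | all_des].
  rewrite mem_iota subnKC ?(ltnW lt_ij) // => /andP [le_ik lt_kj].
  have lt_jk : entry p j < entry p k.
    case: (ltngtP i k) le_ik => [lt_ik _ | // | <- //].
    by have /andP [] := layered_between (introT andP (conj lt_ik lt_kj)) lt_jn lt_ji.
  rewrite is_desE (leq_ltn_trans lt_kj lt_jn) /=.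
  case: (ltngtP k.+1 j) lt_kj => [lt_k1j _ | // | -> //].
  by have /andP [] := layered_between (introT andP (conj (ltnSn k) lt_k1j)) lt_jn lt_jk.
apply: (decreasing_run lt_ij) => k lt_ikj.
have := all_des k; rewrite mem_iota subnKC ?(ltnW lt_ij) // => /(_ lt_ikj).
by rewrite is_desE => /andP [].
Qed.

End Layered.

Lemma suffix_extremal_ltnE n (p : 'S_n) i j : suffix_extremal p -> i < j -> j < n ->
  (entry p i < entry p j) = is_asc p i.
Proof.
case/andP => /avoids213P av213 /avoids231P av231 lt_ij lt_jn.
rewrite is_ascE (leq_ltn_trans lt_ij lt_jn) /=.
case: (ltngtP i.+1 j) lt_ij => [lt_i1j _ | // | -> //].
have lt_abc : i < i.+1 < j by rewrite ltnSn.
have := av213 i i.+1 j lt_abc lt_jn; have := av231 i i.+1 j lt_abc lt_jn.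
have [] := entry_neq3 p lt_abc lt_jn; lia.
Qed.

Section Standardization.
Variables (n : nat) (key : nat -> nat).
Hypothesis key_inj : injective (fun i : 'I_n => key i).

Definition key_rank (i : 'I_n) := #|[set j : 'I_n | key j < key i]|.

Lemma key_rank_mono (i j : 'I_n) : key i < key j -> key_rank i < key_rank j.
Proof.
move=> lt_ij; apply: proper_card; apply/properP; split; last by exists i; rewrite !inE ?ltnn.
by apply/subsetP => k; rewrite !inE => /ltn_trans; apply.
Qed.

Lemma key_rank_ltnE (i j : 'I_n) : (key_rank i < key_rank j) = (key i < key j).
Proof.
case: (ltngtP (key i) (key j)) => [|lt_ji|/key_inj ->]; last exact: ltnn.
  exact: key_rank_mono.
by apply/negbTE; rewrite -leqNgt ltnW // key_rank_mono.
Qed.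

Lemma key_rank_lt (i : 'I_n) : key_rank i < n.
Proof.
rewrite -[n in _ < n]card_ord -cardsT; apply: proper_card; apply/properP.
by split; [exact: subsetT | exists i; rewrite ?inE ?ltnn].
Qed.

Lemma key_rank_inj : injective (fun i => Ordinal (key_rank_lt i)).
Proof.
move=> i j /(congr1 val) /= eq_rank; apply: key_inj.
by case: (ltngtP (key i) (key j)) => // /key_rank_mono; rewrite eq_rank ltnn.
Qed.

Definition std : 'S_n := perm key_rank_inj.

Lemma std_ltnE a b : a < n -> b < n -> (entry std a < entry std b) = (key a < key b).
Proof.
move=> lt_an lt_bn.
by rewrite -[a]/(Ordinal lt_an : nat) -[b]/(Ordinal lt_bn : nat) !entry_ord !permE key_rank_ltnE.
Qed.

End Standardization.

Section NatMembership.
Variable n : nat.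

Definition mem_nat (S : {set 'I_n}) k := [exists i in S, val i == k].

Lemma mem_nat_ord (S : {set 'I_n}) (i : 'I_n) : mem_nat S i = (i \in S).
Proof.
apply/existsP/idP => [[j /andP [jS /eqP/val_inj <-]] // | iS].
by exists i; rewrite iS eqxx.
Qed.

Lemma mem_nat_set (P : pred nat) k : mem_nat [set i : 'I_n | P i] k = (k < n) && P k.
Proof.
apply/existsP/andP => [[i /andP [+ /eqP <-]] | [lt_kn Pk]]; first by rewrite inE ltn_ord.
by exists (Ordinal lt_kn); rewrite inE Pk eqxx.
Qed.

End NatMembership.

Definition gaps n := [set i : 'I_n | i.+1 < n].

Lemma eq_sub_gaps n (S1 S2 : {set 'I_n}) : S1 \subset gaps n -> S2 \subset gaps n ->
  (forall i : 'I_n, i.+1 < n -> (i \in S1) = (i \in S2)) -> S1 = S2.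
Proof.
move=> /subsetP S1_gaps /subsetP S2_gaps eq_S; apply/setP => i.
case: (ltnP i.+1 n) => [/eq_S // | le_ni1].
have notin_gaps : i \notin gaps n by rewrite inE -leqNgt.
by rewrite (contraNF (S1_gaps i)) ?(contraNF (S2_gaps i)).
Qed.

Section Layers.
Variables (n : nat) (D : {set 'I_n}).

(* When D is the descent set, [layer D k] is the index of the maximal
   decreasing run containing position k. *)
Definition layer k := count (predC (mem_nat D)) (iota 0 k).

Lemma layerS k : layer k.+1 = layer k + ~~ mem_nat D k.
Proof. by rewrite /layer -addn1 iotaD count_cat /= addn0. Qed.

Lemma layer_ltnE i j : i <= j -> (layer i < layer j) = has (predC (mem_nat D)) (iota i (j - i)).
Proof.
move=> le_ij; rewrite /layer -(subnKC le_ij) iotaD count_cat add0n subnKC //.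
by rewrite -{1}[count _ (iota 0 i)]addn0 ltn_add2l has_count.
Qed.

Lemma layer_mono : {homo layer : i j / i <= j}.
Proof. by move=> i j le_ij; rewrite /layer -(subnKC le_ij) iotaD count_cat leq_addr. Qed.

Definition layered_key k := layer k * n + (n - k).

Lemma layered_key_ltnE i j : i < j -> j < n ->
  (layered_key i < layered_key j) = (layer i < layer j).
Proof. by move=> lt_ij lt_jn; rewrite /layered_key; have := layer_mono (ltnW lt_ij); nia. Qed.

Lemma layered_key_inj : injective (fun i : 'I_n => layered_key i).
Proof.
move=> i j eq_key; apply: val_inj => /=.
wlog lt_ij : i j eq_key / i < j.
  move=> wlog_lt; case: (ltngtP i j) => // [lt_ij | lt_ji]; first exact: wlog_lt.
  exact/esym/wlog_lt.
have := layered_key_ltnE lt_ij (ltn_ord j); rewrite eq_key ltnn.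
have := layer_mono (ltnW lt_ij); move: eq_key; rewrite /layered_key.
have := ltn_ord j; have [-> | ] := eqVneq (layer i) (layer j); lia.
Qed.

Definition layered_perm : 'S_n := std layered_key_inj.

Lemma layered_perm_ltnE i j : i < j -> j < n ->
  (entry layered_perm i < entry layered_perm j) = (layer i < layer j).
Proof. by move=> lt_ij lt_jn; rewrite std_ltnE ?layered_key_ltnE // (ltn_trans lt_ij). Qed.

End Layers.

Section Extremal.
Variables (n : nat) (A : {set 'I_n}).

Definition extremal_key k := if mem_nat A k then k else n.*2 - k.

Lemma extremal_key_ltnE i j : i < j -> j < n -> (extremal_key i < extremal_key j) = mem_nat A i.
Proof. by rewrite /extremal_key; case: (mem_nat A i); case: (mem_nat A j); lia. Qed.

Lemma extremal_key_inj : injective (fun i : 'I_n => extremal_key i).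
Proof.
move=> i j; have := ltn_ord i; have := ltn_ord j; rewrite /extremal_key.
case: (mem_nat A i); case: (mem_nat A j) => lt_jn lt_in eq_key; apply: val_inj => /=; lia.
Qed.

Definition extremal_perm : 'S_n := std extremal_key_inj.

Lemma extremal_perm_ltnE i j : i < j -> j < n ->
  (entry extremal_perm i < entry extremal_perm j) = mem_nat A i.
Proof. by move=> lt_ij lt_jn; rewrite std_ltnE ?extremal_key_ltnE // (ltn_trans lt_ij). Qed.

End Extremal.

Definition desc_set n (p : 'S_n) := [set i : 'I_n | is_des p i].
Definition asc_set n (p : 'S_n) := [set i : 'I_n | is_asc p i].

Lemma desc_set_gaps n (p : 'S_n) : desc_set p \subset gaps n.
Proof. by apply/subsetP => i; rewrite !inE is_desE => /andP []. Qed.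

Lemma asc_set_gaps n (p : 'S_n) : asc_set p \subset gaps n.
Proof. by apply/subsetP => i; rewrite !inE is_ascE => /andP []. Qed.

Lemma mem_nat_desc_set n (p : 'S_n) : mem_nat (desc_set p) =1 is_des p.
Proof. by move=> k; rewrite mem_nat_set; apply: andb_idl => /andP [/ltnW]. Qed.

Lemma mem_nat_asc_set n (p : 'S_n) : mem_nat (asc_set p) =1 is_asc p.
Proof. by move=> k; rewrite mem_nat_set; apply: andb_idl => /andP [/ltnW]. Qed.

Lemma layered_permK n (p : 'S_n) : layered p -> layered_perm (desc_set p) = p.
Proof.
move=> p_layered; apply: perm_eq_ltn => a b lt_ab lt_bn.
rewrite layered_perm_ltnE // layer_ltnE ?(ltnW lt_ab) // has_predC (eq_all (mem_nat_desc_set p)).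
by rewrite -(layered_ltnE p_layered lt_ab lt_bn) entry_gtnE // negbK.
Qed.

Lemma desc_set_layered_perm n (D : {set 'I_n}) : D \subset gaps n -> desc_set (layered_perm D) = D.
Proof.
move=> D_gaps; apply: eq_sub_gaps (desc_set_gaps _) D_gaps _ => i lt_i1n.
rewrite inE is_desE lt_i1n entry_gtnE // layered_perm_ltnE // layerS mem_nat_ord.
by case: (i \in D); rewrite ?addn0 ?addn1 ?ltnn ?ltnSn.
Qed.

Lemma layered_perm_layered n (D : {set 'I_n}) : layered (layered_perm D).
Proof.
apply/andP; split; [apply/avoids231P | apply/avoids312P] => a b c /andP [lt_ab lt_bc] lt_cn;
  have lt_ac := ltn_trans lt_ab lt_bc; have lt_bn := ltn_trans lt_bc lt_cn;
  rewrite (entry_gtnE _ lt_ac lt_cn) !layered_perm_ltnE //;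
  have := layer_mono D (ltnW lt_ab); have := layer_mono D (ltnW lt_bc); lia.
Qed.

Lemma extremal_permK n (p : 'S_n) : suffix_extremal p -> extremal_perm (asc_set p) = p.
Proof.
move=> p_extremal; apply: perm_eq_ltn => a b lt_ab lt_bn.
by rewrite extremal_perm_ltnE // suffix_extremal_ltnE // mem_nat_asc_set.
Qed.

Lemma asc_set_extremal_perm n (A : {set 'I_n}) : A \subset gaps n -> asc_set (extremal_perm A) = A.
Proof.
move=> A_gaps; apply: eq_sub_gaps (asc_set_gaps _) A_gaps _ => i lt_i1n.
by rewrite inE is_ascE lt_i1n extremal_perm_ltnE // mem_nat_ord.
Qed.

Lemma extremal_perm_extremal n (A : {set 'I_n}) : suffix_extremal (extremal_perm A).
Proof.
apply/andP; split; [apply/avoids213P | apply/avoids231P] => a b c /andP [lt_ab lt_bc] lt_cn;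
  have lt_ac := ltn_trans lt_ab lt_bc; have lt_bn := ltn_trans lt_bc lt_cn.
  by rewrite (entry_gtnE _ lt_ab lt_bn) !extremal_perm_ltnE //; case: (mem_nat A a).
by rewrite (entry_gtnE _ lt_ac lt_cn) !extremal_perm_ltnE //; case: (mem_nat A a).
Qed.

Lemma card_layered_by_desc_set n (Q : pred {set 'I_n}) :
  #|[set p | layered p && Q (desc_set p)]| = #|[set S : {set 'I_n} | (S \subset gaps n) && Q S]|.
Proof.
apply: (card_bij_on (B := fun S : {set 'I_n} => S \subset gaps n)
                    (f := @desc_set n) (g := @layered_perm n) Q) => [p _ | D _ | |].
- exact: desc_set_gaps.
- exact: layered_perm_layered.
- exact: layered_permK.
- exact: desc_set_layered_perm.
Qed.

Lemma card_extremal_by_asc_set n (Q : pred {set 'I_n}) :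
  #|[set s | suffix_extremal s && Q (asc_set s)]| =
  #|[set S : {set 'I_n} | (S \subset gaps n) && Q S]|.
Proof.
apply: (card_bij_on (B := fun S : {set 'I_n} => S \subset gaps n)
                    (f := @asc_set n) (g := @extremal_perm n) Q) => [s _ | A _ | |].
- exact: asc_set_gaps.
- exact: extremal_perm_extremal.
- exact: extremal_permK.
- exact: asc_set_extremal_perm.
Qed.

Definition max_nonadj n (S : {set 'I_n}) :=
  \max_(I : {set 'I_n} | nonadj_set (mem_nat S) I) #|I|.

Definition gap_profile n (S : {set 'I_n}) :=
  (#|gaps n :\: S|, #|S|, max_nonadj (gaps n :\: S), max_nonadj S).

Lemma eq_nonadj_set n (P P' : nat -> bool) (I : {set 'I_n}) :
  (forall i : 'I_n, P i = P' i) -> nonadj_set P I = nonadj_set P' I.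
Proof. by move=> eqP'; rewrite /nonadj_set (eq_forallb (fun i => congr1 _ (eqP' i))). Qed.

Lemma MNA_asc_set n (p : 'S_n) : MNA p = max_nonadj (asc_set p).
Proof. by apply: eq_bigl => I; apply: eq_nonadj_set => i; rewrite mem_nat_asc_set. Qed.

Lemma MND_desc_set n (p : 'S_n) : MND p = max_nonadj (desc_set p).
Proof. by apply: eq_bigl => I; apply: eq_nonadj_set => i; rewrite mem_nat_desc_set. Qed.

Lemma asc_card n (p : 'S_n) : asc p = #|asc_set p|.
Proof. by rewrite card_ord_pred. Qed.

Lemma des_card n (p : 'S_n) : des p = #|desc_set p|.
Proof. by rewrite card_ord_pred. Qed.

Lemma asc_setE n (p : 'S_n) : asc_set p = gaps n :\: desc_set p.
Proof.
apply/setP => i; rewrite !inE is_ascE is_desE.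
case: (ltnP i.+1 n) => [lt_i1n | _]; rewrite ?andbF ?andbT //=.
by rewrite (entry_gtnE _ (ltnSn i) lt_i1n) negbK.
Qed.

Lemma desc_setE n (p : 'S_n) : desc_set p = gaps n :\: asc_set p.
Proof.
apply/setP => i; rewrite !inE is_ascE is_desE.
by case: (ltnP i.+1 n) => [lt_i1n | _]; rewrite ?andbF ?andbT //= (entry_gtnE _ (ltnSn i) lt_i1n).
Qed.

Lemma asc_des_profile n (p : 'S_n) : (asc p, des p, MNA p, MND p) = gap_profile (desc_set p).
Proof. by rewrite asc_card des_card MNA_asc_set MND_desc_set asc_setE. Qed.

Lemma des_asc_profile n (p : 'S_n) : (des p, asc p, MND p, MNA p) = gap_profile (asc_set p).
Proof. by rewrite asc_card des_card MNA_asc_set MND_desc_set desc_setE. Qed.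

Theorem theorem15 (n a b c d : nat) :
  #|[set p : 'S_n | avoids p [:: 2; 3; 1] && avoids p [:: 3; 1; 2] &&
       ((asc p, des p, MNA p, MND p) == (a, b, c, d))]| =
  #|[set s : 'S_n | avoids s [:: 2; 1; 3] && avoids s [:: 2; 3; 1] &&
       ((des s, asc s, MND s, MNA s) == (a, b, c, d))]|.
Proof.
pose Q (S : {set 'I_n}) := gap_profile S == (a, b, c, d).
transitivity #|[set p | layered p && Q (desc_set p)]|.
  by apply: eq_card => p; rewrite !inE asc_des_profile.
transitivity #|[set s | suffix_extremal s && Q (asc_set s)]|; last first.
  by apply: eq_card => s; rewrite !inE des_asc_profile.
by rewrite card_layered_by_desc_set card_extremal_by_asc_set.
Qed.
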